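(* Let $A\subseteq\omega$ be a c.e. set and $\epsilon$ a positive real number. Then $A$ has a computable subset $B$ such that $\underline{\rho}(B)>\underline{\rho}(A)-\epsilon$.
   Context: For $S\subseteq\omega$ and $n>0$, $\rho_n(S)=|S\cap[0,n)|/n$, and the lower density is $\underline{\rho}(S)=\liminf_n\rho_n(S)$. *)

From mathcomp Require Import all_boot all_order all_algebra.
From mathcomp Require Import all_classical all_reals all_analysis.
Set Implicit Arguments. Unset Strict Implicit. Unset Printing Implicit Defensive.
Import Order.TTheory GRing.Theory Num.Theory.

(* Untyped syntax; arguments are lists of naturals, missing arguments read as 0. *)
Inductive prf : Type :=
| PZero : prf
| PSucc : prf
| PProj : nat -> prf
| PComp : prf -> list prf -> prf
| PRec  : prf -> prf -> prf
| PMu   : prf -> prf.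

Inductive eval : prf -> list nat -> nat -> Prop :=
| eZero xs : eval PZero xs 0
| eSucc xs : eval PSucc xs (nth 0 xs 0).+1
| eProj i xs : eval (PProj i) xs (nth 0 xs i)
| eComp f gs xs ys y : evals gs xs ys -> eval f ys y -> eval (PComp f gs) xs y
| eRec0 f g xs y : eval f xs y -> eval (PRec f g) (0 :: xs) y
| eRecS f g n xs r y :
    eval (PRec f g) (n :: xs) r -> eval g (n :: r :: xs) y ->
    eval (PRec f g) (n.+1 :: xs) y
| eMu f xs y :
    eval f (y :: xs) 0 ->
    (forall z, (z < y)%N -> exists v, eval f (z :: xs) v.+1) ->
    eval (PMu f) xs y
with evals : list prf -> list nat -> list nat -> Prop :=
| esNil xs : evals nil xs nil
| esCons g gs xs y ys : eval g xs y -> evals gs xs ys -> evals (g :: gs) xs (y :: ys).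

Definition computable_set (S : set nat) : Prop :=
  exists p : prf, forall n, eval p [:: n] (if `[< S n >] then 1 else 0)%N.

Definition ce_set (S : set nat) : Prop :=
  exists p : prf, forall n, S n <-> exists y, eval p [:: n] y.

Local Open Scope ring_scope.

Definition rho (R : realType) (S : set nat) (n : nat) : R :=
  (\sum_(0 <= i < n) (`[< S i >] : nat)%:R) / n%:R.

Definition lower_density (R : realType) (S : set nat) : \bar R :=
  limn_einf (fun n => (rho R S n.+1)%:E).

From Pilot Require Import Defs.
From mathcomp Require Import all_boot all_order all_algebra.
From mathcomp Require Import all_classical all_reals all_analysis.
From mathcomp Require Import lra.
Import Defs.
Set Implicit Arguments. Unset Strict Implicit. Unset Printing Implicit Defensive.
Local Open Scope nat_scope.
Local Open Scope classical_set_scope.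

(* Choose [K] with [K eps > 3] and [a] with [a/K] just below the lower density [d] of [A],
   so that [a m <= K |A ∩ [0,m)|] for all [m >= N].  Take a program [p] with domain [A]
   and say that [x] halts by stage [s] when evaluating [p] at [x] succeeds with every
   unbounded search restricted to witnesses below [s]: this is primitive recursive and
   monotone in [s].  Let [stage x] be the least [s] such that the points halted by stage
   [s] already satisfy [a m <= K * count] for all [m] in [[N, K(x+1)]]; it exists since [A]
   satisfies these finitely many inequalities, and it is computable and nondecreasing.
   Then [B = {x | x halts by stage x}] is a computable subset of [A].  For [m >= N] and
   [j = m / K], the inequality at [stage j] counts halted points; those [>= j] lie in [B]
   because [stage] is nondecreasing, and there are at most [j <= m/K] others.  Hence
   [a m <= m + K |B ∩ [0,m)|], and the lower density of [B] is at least [(a-1)/K > d - eps]. *)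

Lemma ex_uniform_bound (P : nat -> nat -> Prop) n :
  (forall z s s', s <= s' -> P z s -> P z s') ->
  (forall z, z < n -> exists s, P z s) -> exists s, forall z, z < n -> P z s.
Proof.
move=> Pmono; elim: n => [|n IH] H; first by exists 0.
have [s1 H1] := IH (fun z hz => H z (ltnW hz)).
have [s2 H2] := H n (ltnSn n).
exists (maxn s1 s2) => z; rewrite ltnS leq_eqVlt => /orP[/eqP ->|hz].
  exact: Pmono (leq_maxr _ _) H2.
exact: Pmono (leq_maxl _ _) (H1 _ hz).
Qed.

Lemma sum_nat_bool_le (b : nat -> bool) m n : \sum_(m <= i < n) b i <= n - m.
Proof.
rewrite -[n - m]muln1 -sum_nat_const_nat.
by apply: leq_sum => i _; apply: leq_b1.
Qed.

(** * Primitive recursive building blocks *)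

Lemma eval_eq p xs y y' : eval p xs y -> y = y' -> eval p xs y'.
Proof. by move=> H <-. Qed.

Lemma eval_proj i xs y : y = nth 0 xs i -> eval (PProj i) xs y.
Proof. by move=> ->; constructor. Qed.

Lemma eval_rec f g xs y0 (h : nat -> nat -> nat) :
  eval f xs y0 -> (forall i r, eval g (i :: r :: xs) (h i r)) ->
  forall n, eval (PRec f g) (n :: xs) (iteri n h y0).
Proof.
move=> Hf Hg; elim=> [|n IH] /=; first by constructor.
exact: eRecS IH (Hg _ _).
Qed.

Lemma evals_inv0 xs ys : evals [::] xs ys -> ys = [::].
Proof. by move=> H; inversion H. Qed.

Lemma evals_invS g gs xs ys : evals (g :: gs) xs ys ->
  exists y ys', [/\ ys = y :: ys', eval g xs y & evals gs xs ys'].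
Proof. by move=> H; inversion H; subst; exists y, ys0. Qed.

Lemma evals_map_proj l xs :
  evals [seq PProj j | j <- l] xs [seq nth 0 xs j | j <- l].
Proof. by elim: l => [|j l IH] /=; [apply: esNil | apply: esCons IH; apply: eProj]. Qed.

Lemma evals_proj_iota0 l : evals (map PProj (iota 0 (size l))) l l.
Proof.
have := evals_map_proj (iota 0 (size l)) l.
by rewrite (_ : [seq _ | _ <- _] = l) //; apply: mkseq_nth.
Qed.

Lemma evals_proj_iota2 x r l : evals (map PProj (iota 2 (size l))) [:: x, r & l] l.
Proof.
have := evals_map_proj (iota 2 (size l)) [:: x, r & l].
by rewrite (_ : [seq _ | _ <- _] = l) // -[2]addn0 iotaDl -map_comp; apply: mkseq_nth.
Qed.

Lemma evals_rcons gs xs ys g y : evals gs xs ys -> eval g xs y ->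
  evals (rcons gs g) xs (rcons ys y).
Proof.
elim: gs ys => [|g' gs IH] ys H Hg.
  by rewrite (evals_inv0 H); apply: esCons Hg (esNil _).
have [y' [ys' [-> Hg' Hgs]]] := evals_invS H.
exact: esCons Hg' (IH _ Hgs Hg).
Qed.

Definition Pcomp1 f g := PComp f [:: g].
Definition Pcomp2 f g h := PComp f [:: g; h].

Lemma eval_Pcomp1 f g xs a y : eval g xs a -> eval f [:: a] y -> eval (Pcomp1 f g) xs y.
Proof. by move=> Hg Hf; apply: eComp Hf; apply: esCons Hg (esNil _). Qed.

Lemma eval_Pcomp2 f g h xs a b y :
  eval g xs a -> eval h xs b -> eval f [:: a; b] y -> eval (Pcomp2 f g h) xs y.
Proof. by move=> Hg Hh Hf; apply: eComp Hf; apply: esCons Hg (esCons Hh (esNil _)). Qed.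

Definition Psucc a := Pcomp1 PSucc a.

Lemma eval_Psucc a xs v : eval a xs v -> eval (Psucc a) xs v.+1.
Proof. by move=> Ha; apply: eval_Pcomp1 Ha (eSucc _). Qed.

Definition Pconst c := iter c Psucc PZero.

Lemma eval_Pconst c xs : eval (Pconst c) xs c.
Proof. by elim: c => [|c IH]; [apply: eZero | apply: eval_Psucc]. Qed.

Definition pred_prf := PRec PZero (PProj 0).
Definition add_prf := PRec (PProj 0) (Psucc (PProj 1)).
Definition mul_prf := PRec PZero (Pcomp2 add_prf (PProj 1) (PProj 2)).
Definition subr_prf := PRec (PProj 0) (Pcomp1 pred_prf (PProj 1)).
Definition nz_prf := PRec PZero (Pconst 1).
Definition eq0_prf := PRec (Pconst 1) PZero.

Lemma eval_pred_prf x xs : eval pred_prf (x :: xs) x.-1.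
Proof.
have step i r : eval (PProj 0) (i :: r :: xs) i by apply: eProj.
by apply: eval_eq (eval_rec (eZero _) step x) _; case: x.
Qed.

Lemma eval_add_prf x y xs : eval add_prf (x :: y :: xs) (x + y).
Proof.
have step i r : eval (Psucc (PProj 1)) (i :: r :: y :: xs) r.+1.
  exact/eval_Psucc/eProj.
apply: eval_eq (eval_rec (eProj 0 _) step x) _.
by elim: x => //= x ->.
Qed.

Lemma eval_mul_prf x y xs : eval mul_prf (x :: y :: xs) (x * y).
Proof.
have step i r : eval (Pcomp2 add_prf (PProj 1) (PProj 2)) (i :: r :: y :: xs) (r + y).
  exact: eval_Pcomp2 (eProj _ _) (eProj _ _) (eval_add_prf _ _ _).
apply: eval_eq (eval_rec (eZero _) step x) _.
by elim: x => //= x ->; rewrite mulSn addnC.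
Qed.

Lemma eval_subr_prf y x xs : eval subr_prf (y :: x :: xs) (x - y).
Proof.
have step i r : eval (Pcomp1 pred_prf (PProj 1)) (i :: r :: x :: xs) r.-1.
  exact: eval_Pcomp1 (eProj _ _) (eval_pred_prf _ _).
apply: eval_eq (eval_rec (eProj 0 _) step y) _.
by elim: y => /= [|y ->]; rewrite ?subn0 ?subnS.
Qed.

Lemma eval_nz_prf x xs : eval nz_prf (x :: xs) (x != 0).
Proof.
have step i r : eval (Pconst 1) (i :: r :: xs) 1 by apply: eval_Pconst.
by apply: eval_eq (eval_rec (eZero _) step x) _; case: x.
Qed.

Lemma eval_eq0_prf x xs : eval eq0_prf (x :: xs) (x == 0).
Proof.
have step i r : eval PZero (i :: r :: xs) 0 by apply: eZero.
by apply: eval_eq (eval_rec (eval_Pconst 1 _) step x) _; case: x.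
Qed.

Definition Ppred a := Pcomp1 pred_prf a.
Definition Padd a b := Pcomp2 add_prf a b.
Definition Pmul a b := Pcomp2 mul_prf a b.
Definition Psub a b := Pcomp2 subr_prf b a.
Definition Pnz a := Pcomp1 nz_prf a.
Definition Peq0 a := Pcomp1 eq0_prf a.
Definition Pif c a b := Padd (Pmul (Pnz c) a) (Pmul (Peq0 c) b).
Definition Pleq a b := Peq0 (Psub a b).
Definition Pltn a b := Pleq (Psucc a) b.
Definition Por a b := Pnz (Padd a b).

Section Operators.
Variables (a b : prf) (xs : seq nat) (va vb : nat).
Hypotheses (Ha : eval a xs va) (Hb : eval b xs vb).

Lemma eval_Ppred : eval (Ppred a) xs va.-1.
Proof. exact: eval_Pcomp1 Ha (eval_pred_prf _ _). Qed.

Lemma eval_Padd : eval (Padd a b) xs (va + vb).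
Proof. exact: eval_Pcomp2 Ha Hb (eval_add_prf _ _ _). Qed.

Lemma eval_Pmul : eval (Pmul a b) xs (va * vb).
Proof. exact: eval_Pcomp2 Ha Hb (eval_mul_prf _ _ _). Qed.

Lemma eval_Psub : eval (Psub a b) xs (va - vb).
Proof. exact: eval_Pcomp2 Hb Ha (eval_subr_prf _ _ _). Qed.

Lemma eval_Pnz : eval (Pnz a) xs (va != 0).
Proof. exact: eval_Pcomp1 Ha (eval_nz_prf _ _). Qed.

Lemma eval_Peq0 : eval (Peq0 a) xs (va == 0).
Proof. exact: eval_Pcomp1 Ha (eval_eq0_prf _ _). Qed.

End Operators.

Section Derived.
Variables (a b c : prf) (xs : seq nat) (va vb vc : nat).
Hypotheses (Ha : eval a xs va) (Hb : eval b xs vb) (Hc : eval c xs vc).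

Lemma eval_Pif : eval (Pif c a b) xs (if vc is 0 then vb else va).
Proof.
apply: eval_eq (eval_Padd (eval_Pmul (eval_Pnz Hc) Ha) (eval_Pmul (eval_Peq0 Hc) Hb)) _.
by case: (vc); rewrite /= ?mul1n ?mul0n ?addn0.
Qed.

Lemma eval_Pleq : eval (Pleq a b) xs (va <= vb).
Proof. exact: eval_Peq0 (eval_Psub Ha Hb). Qed.

Lemma eval_Pltn : eval (Pltn a b) xs (va < vb).
Proof. exact: eval_Peq0 (eval_Psub (eval_Psucc Ha) Hb). Qed.

End Derived.

Lemma eval_Por a b xs (ba bb : bool) :
  eval a xs ba -> eval b xs bb -> eval (Por a b) xs (ba || bb).
Proof. by move=> Ha Hb; apply: eval_eq (eval_Pnz (eval_Padd Ha Hb)) _; case: (ba); case: (bb). Qed.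

(** * Evaluation with bounded searches *)

Section PrfInd.
Variable P : prf -> Prop.
Hypotheses (HZ : P PZero) (HS : P PSucc) (HP : forall i, P (PProj i)).
Hypothesis HC : forall f gs, P f -> foldr (fun g Q => P g /\ Q) True gs -> P (PComp f gs).
Hypothesis HR : forall f g, P f -> P g -> P (PRec f g).
Hypothesis HM : forall f, P f -> P (PMu f).

Fixpoint prf_nested_ind (p : prf) : P p :=
  match p with
  | PZero => HZ | PSucc => HS | PProj i => HP i
  | PComp f gs => HC (prf_nested_ind f)
      ((fix all_ind gs : foldr (fun g Q => P g /\ Q) True gs :=
          if gs is g :: gs' then conj (prf_nested_ind g) (all_ind gs') else I) gs)
  | PRec f g => HR (prf_nested_ind f) (prf_nested_ind g)
  | PMu f => HM (prf_nested_ind f)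
  end.
End PrfInd.

(* State of a search for the least zero of [v], which codes a value [y] as [y.+1] and
   "undefined" as [0]: [0] while searching, [1] after an undefined value, [z.+2] once the
   zero [z] is found. *)
Definition mu_step (v : nat -> nat) (i st : nat) : nat :=
  if st is 0 then (if v i is 0 then 1 else if (v i).-1 is 0 then i.+2 else 0) else st.

Definition mu_search (v : nat -> nat) (n : nat) : nat := iteri n (mu_step v) 0.

Lemma mu_search_eq0 v n : mu_search v n = 0 <-> (forall z, z < n -> 1 < v z).
Proof.
elim: n => [|n IH]; first by split.
rewrite /mu_search iteriS -/(mu_search v n) /mu_step.
case: (mu_search v n) IH => [|st] IH; last first.
  by split=> // H; suff: st.+1 = 0 by []; apply/IH => z hz; apply/H/ltnW.
have {IH} [/(_ erefl) Hlt _] := IH; split.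
  case Ev: (v n) => [|[|w]] // _ z; rewrite ltnS leq_eqVlt => /orP[/eqP ->|/Hlt //].
  by rewrite Ev.
by move=> H; move: (H n (ltnSn n)); case: (v n) => [|[|w]].
Qed.

Lemma mu_search_eqSS v n z :
  mu_search v n = z.+2 <-> [/\ z < n, v z = 1 & forall z', z' < z -> 1 < v z'].
Proof.
elim: n => [|n IH]; first by split=> // [[]].
rewrite /mu_search iteriS -/(mu_search v n) /mu_step.
case E: (mu_search v n) => [|st].
  have Hlt := (mu_search_eq0 v n).1 E; split.
    by case Ev: (v n) => [|[|w]] //= [<-]; split.
  case; rewrite ltnS leq_eqVlt => /orP[/eqP -> -> //|hz Hz _].
  by have := Hlt z hz; rewrite Hz.
rewrite -E IH; split=> -[hz Hz Hmin]; split=> //; first exact: ltnW.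
move: hz; rewrite ltnS leq_eqVlt => /orP[/eqP Ezn|//].
by move: E; rewrite (mu_search_eq0 v n).2 // -Ezn.
Qed.

(* Evaluation in which every unbounded search only tests witnesses below [s];
   the result [0] means "no value", and [y.+1] codes the value [y]. *)
Fixpoint bounded_eval (p : prf) (s : nat) (xs : seq nat) {struct p} : nat :=
  match p with
  | PZero => 1
  | PSucc => (nth 0 xs 0).+2
  | PProj i => (nth 0 xs i).+1
  | PComp f gs =>
      if all (fun v => v != 0) (map (fun g => bounded_eval g s xs) gs)
      then bounded_eval f s (map predn (map (fun g => bounded_eval g s xs) gs)) else 0
  | PRec f g =>
      if xs is n :: xs' then
        iteri n (fun i r => if r is 0 then 0 else bounded_eval g s (i :: r.-1 :: xs'))
          (bounded_eval f s xs')
      else 0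
  | PMu f => (mu_search (fun z => bounded_eval f s (z :: xs)) s).-1
  end.

Lemma map_succ_pred vs : all (fun v => v != 0) vs -> map S (map predn vs) = vs.
Proof. by elim: vs => [|[|v] vs IH] //= /IH ->. Qed.

Lemma bounded_eval_sound p s xs y : bounded_eval p s xs = y.+1 -> eval p xs y.
Proof.
elim/prf_nested_ind: p s xs y => [||i|f gs IHf IHgs|f g IHf IHg|f IHf] s xs y /=.
- by case=> <-; constructor.
- by case=> <-; constructor.
- by case=> <-; constructor.
- case: ifP => // /map_succ_pred Evs /IHf; apply: eComp.
  elim: gs IHgs Evs => [|g gs IH] /=; first by move=> *; apply: esNil.
  by case=> Hg Hgs [Eg /(IH Hgs)]; apply: esCons; apply: Hg; rewrite Eg.
- case: xs => [|n xs] //; elim: n y => [|n IH] y /=; first by move/IHf; constructor.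
  by case E: (iteri n _ _) => [|r] // /IHg; apply: eRecS (IH _ E).
- case E: (mu_search _ _) => [|[|z]] // [<-].
  have [_ /IHf Hz Hmin] := (mu_search_eqSS _ _ _).1 E; constructor => // z' /Hmin.
  case: (bounded_eval f s (z' :: xs)) (IHf s (z' :: xs)) => [|[|w]] // Hw _.
  by exists w; apply: Hw.
Qed.

Lemma bounded_eval_mono p s s' xs : s <= s' ->
  bounded_eval p s xs != 0 -> bounded_eval p s' xs = bounded_eval p s xs.
Proof.
elim/prf_nested_ind: p s s' xs => [||i|f gs IHf IHgs|f g IHf IHg|f IHf] s s' xs Hs //=.
- case: ifP => // Hall Hf.
  have -> : map (fun g => bounded_eval g s' xs) gs = map (fun g => bounded_eval g s xs) gs.
    elim: gs IHgs Hall {Hf} => [|g gs IH] //= [Hg Hgs] /andP[Hgnz /(IH Hgs) ->].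
    by rewrite (Hg _ _ _ Hs).
  by rewrite Hall (IHf _ _ _ Hs).
- case: xs => [|n xs] //; elim: n => [|n IH] /=; first exact: IHf.
  by case E: (iteri n _ _) => [|r] // Hr; rewrite IH ?E //= (IHg _ _ _ Hs).
- case E: (mu_search _ _) => [|[|z]] // _.
  have [Hz Hz1 Hmin] := (mu_search_eqSS _ _ _).1 E.
  rewrite ((mu_search_eqSS _ _ z).2 _) //; split.
  + exact: leq_trans Hz Hs.
  + by rewrite (IHf _ _ _ Hs) ?Hz1.
  + move=> z' /Hmin; case Ev: (bounded_eval f s (z' :: xs)) => [|v] // Hv.
    by rewrite (IHf _ _ _ Hs) ?Ev.
Qed.

Lemma bounded_eval_monoS p s s' xs y : s <= s' ->
  bounded_eval p s xs = y.+1 -> bounded_eval p s' xs = y.+1.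
Proof. by move=> Hs E; rewrite (bounded_eval_mono Hs) ?E. Qed.

Section EvalInd.
Variables (P : prf -> seq nat -> nat -> Prop) (Ps : seq prf -> seq nat -> seq nat -> Prop).
Hypothesis HZ : forall xs, P PZero xs 0.
Hypothesis HS : forall xs, P PSucc xs (nth 0 xs 0).+1.
Hypothesis HP : forall i xs, P (PProj i) xs (nth 0 xs i).
Hypothesis HC : forall f gs xs ys y,
  Ps gs xs ys -> P f ys y -> P (PComp f gs) xs y.
Hypothesis HR0 : forall f g xs y, P f xs y -> P (PRec f g) (0 :: xs) y.
Hypothesis HRS : forall f g n xs r y,
  P (PRec f g) (n :: xs) r -> P g (n :: r :: xs) y -> P (PRec f g) (n.+1 :: xs) y.
Hypothesis HM : forall f xs y, P f (y :: xs) 0 ->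
  (forall z, z < y -> exists v, P f (z :: xs) v.+1) -> P (PMu f) xs y.
Hypothesis HN : forall xs, Ps [::] xs [::].
Hypothesis HCons : forall g gs xs y ys, P g xs y -> Ps gs xs ys -> Ps (g :: gs) xs (y :: ys).

Fixpoint eval_nested_ind p xs y (H : eval p xs y) {struct H} : P p xs y :=
  match H in eval p xs y return P p xs y with
  | eZero xs => HZ xs
  | eSucc xs => HS xs
  | eProj i xs => HP i xs
  | eComp f gs xs ys y Hgs Hf => HC (evals_nested_ind Hgs) (eval_nested_ind Hf)
  | eRec0 f g xs y Hf => HR0 g (eval_nested_ind Hf)
  | eRecS f g n xs r y Hr Hg => HRS (eval_nested_ind Hr) (eval_nested_ind Hg)
  | eMu f xs y H0 Hlt => HM (eval_nested_ind H0) (fun z hz =>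
      let: ex_intro v Hv := Hlt z hz in ex_intro _ v (eval_nested_ind Hv))
  end
with evals_nested_ind gs xs ys (H : evals gs xs ys) {struct H} : Ps gs xs ys :=
  match H in evals gs xs ys return Ps gs xs ys with
  | esNil xs => HN xs
  | esCons g gs xs y ys Hg Hgs => HCons (eval_nested_ind Hg) (evals_nested_ind Hgs)
  end.
End EvalInd.

Lemma bounded_eval_complete p xs y : eval p xs y -> exists s, bounded_eval p s xs = y.+1.
Proof.
pose Ps gs xs ys := exists s, map (fun g => bounded_eval g s xs) gs = map S ys.
have Ps_mono gs xs' ys s s' : s <= s' ->
    map (fun g => bounded_eval g s xs') gs = map S ys ->
    map (fun g => bounded_eval g s' xs') gs = map S ys.
  move=> Hs; elim: gs ys => [|g gs IH] [|v vs] //= [Eg /IH ->].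
  by rewrite (bounded_eval_monoS Hs Eg).
move=> H; apply: (eval_nested_ind (P := fun p xs y => exists s, bounded_eval p s xs = y.+1)
  (Ps := Ps) _ _ _ _ _ _ _ _ _ H) => {p xs y H}.
- by move=> xs; exists 0.
- by move=> xs; exists 0.
- by move=> i xs; exists 0.
- move=> f gs xs ys y [s1 E1] [s2 E2]; exists (maxn s1 s2) => /=.
  rewrite (Ps_mono _ _ _ _ _ (leq_maxl _ _) E1).
  have -> : all (fun v => v != 0) (map S ys) by apply/allP => _ /mapP[v _ ->].
  rewrite (mapK succnK).
  exact: bounded_eval_monoS (leq_maxr _ _) E2.
- by move=> f g xs y [s E]; exists s.
- move=> f g n xs r y [s1 E1] [s2 E2]; exists (maxn s1 s2).
  move: (bounded_eval_monoS (leq_maxl s1 s2) E1) => /= ->.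
  exact: bounded_eval_monoS (leq_maxr _ _) E2.
- move=> f xs y [s0 E0] Hlt.
  have [s1 E1] : exists s, forall z, z < y -> 1 < bounded_eval f s (z :: xs).
    apply: ex_uniform_bound; last by move=> z /Hlt [v [s Es]]; exists s; rewrite Es.
    move=> z s s' Hs.
    by case E: (bounded_eval f s (z :: xs)) => [|v] //; rewrite (bounded_eval_monoS Hs E).
  pose s := maxn (maxn s0 s1) y.+1; exists s => /=.
  have [Hs0 Hs1 Hy] : [/\ s0 <= s, s1 <= s & y < s].
    by split; rewrite /s !leq_max leqnn ?orbT.
  rewrite ((mu_search_eqSS _ _ y).2 _) //; split=> //; first exact: bounded_eval_monoS Hs0 E0.
  move=> z /E1; case Ev: (bounded_eval f s1 (z :: xs)) => [|v] //.
  by rewrite (bounded_eval_monoS Hs1 Ev).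
- by move=> xs; exists 0.
- move=> g gs xs y ys [s1 E1] [s2 E2]; exists (maxn s1 s2) => /=.
  by rewrite (bounded_eval_monoS (leq_maxl _ _) E1) (Ps_mono _ _ _ _ _ (leq_maxr _ _) E2).
Qed.

(** * Bounded evaluation is primitive recursive *)

(* [Pproj_below k i] reads [0] beyond the first [k] arguments, as [nth] does, so that the
   stage passed as an extra last argument is never read as an argument of [p]. *)
Definition Pproj_below k i := if i < k then PProj i else PZero.

Definition Pall_nz (qs : seq prf) := foldr (fun q r => Pmul (Pnz q) r) (Pconst 1) qs.

Lemma eval_Pall_nz qs xs vs :
  evals qs xs vs -> eval (Pall_nz qs) xs (all (fun v => v != 0) vs).
Proof.
elim: qs vs => [|q qs IH] vs H; first by rewrite (evals_inv0 H); apply: eval_Pconst.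
have [v [vs' [-> Hq Hqs]]] := evals_invS H.
by apply: eval_eq (eval_Pmul (eval_Pnz Hq) (IH _ Hqs)) _; rewrite mulnb.
Qed.

Definition Pbounded_comp (tf : prf) (tgs : seq prf) k :=
  Pif (Pall_nz tgs) (PComp tf (rcons (map Ppred tgs) (PProj k))) PZero.

Definition Pbounded_rec (tf tg : prf) k :=
  PRec tf (Pif (PProj 1) (PComp tg [:: PProj 0, Ppred (PProj 1) & map PProj (iota 2 k)]) PZero).

Definition Pmu_step (tf : prf) k :=
  let V := PComp tf (PProj 0 :: map PProj (iota 2 k.+1)) in
  Pif (PProj 1) (PProj 1) (Pif V (Pif (Ppred V) PZero (Padd (PProj 0) (Pconst 2))) (Pconst 1)).

Definition Pbounded_mu (tf : prf) k :=
  Ppred (PComp (PRec PZero (Pmu_step tf k)) (PProj k :: map PProj (iota 0 k.+1))).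

Section BoundedEvalProgram.
Variables (k s : nat) (xs : seq nat).
Hypothesis Hk : size xs = k.

Lemma eval_Pproj_below i : eval (Pproj_below k i) (rcons xs s) (nth 0 xs i).
Proof.
rewrite /Pproj_below; case: ltnP => [hi|hi].
  by apply: eval_proj; rewrite nth_rcons Hk hi.
by rewrite nth_default ?Hk //; apply: eZero.
Qed.

Lemma eval_Pbounded_comp tf tgs vs y :
  evals tgs (rcons xs s) vs -> eval tf (rcons (map predn vs) s) y ->
  eval (Pbounded_comp tf tgs k) (rcons xs s) (if all (fun v => v != 0) vs then y else 0).
Proof.
move=> Htgs Htf; apply: eval_eq (eval_Pif _ (eZero _) (eval_Pall_nz Htgs)) _.
  apply: eComp Htf; apply: evals_rcons.
    elim: tgs vs Htgs => [|q qs IH] vs H; first by rewrite (evals_inv0 H); apply: esNil.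
    have [v [vs' [-> Hq Hqs]]] := evals_invS H.
    exact: esCons (eval_Ppred Hq) (IH _ Hqs).
  by apply: eval_proj; rewrite nth_rcons Hk ltnn eqxx.
by case: all.
Qed.

Lemma eval_Pbounded_rec tf tg y0 (G : nat -> nat -> nat) n :
  eval tf (rcons xs s) y0 -> (forall i r, eval tg [:: i, r & rcons xs s] (G i r)) ->
  eval (Pbounded_rec tf tg k.+1) (n :: rcons xs s)
    (iteri n (fun i r => if r is 0 then 0 else G i r.-1) y0).
Proof.
move=> Htf Htg; apply: eval_rec Htf _ n => i r.
apply: eval_eq (eval_Pif _ (eZero _) (eProj 1 _)) _; last by case: r.
apply: eComp (Htg i r.-1); apply: esCons (eProj _ _) _.
apply: esCons (eval_Ppred (eProj 1 _)) _.
by have := evals_proj_iota2 i r (rcons xs s); rewrite size_rcons Hk.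
Qed.

Lemma eval_Pmu_step tf v i st :
  (forall z, eval tf (z :: rcons xs s) (v z)) ->
  eval (Pmu_step tf k) [:: i, st & rcons xs s] (mu_step v i st).
Proof.
move=> Htf.
have HV : eval (PComp tf (PProj 0 :: map PProj (iota 2 k.+1))) [:: i, st & rcons xs s] (v i).
  apply: eComp (Htf i); apply: esCons (eProj _ _) _.
  by have := evals_proj_iota2 i st (rcons xs s); rewrite size_rcons Hk.
apply: eval_eq (eval_Pif (eProj 1 _) (eval_Pif (eval_Pif (eZero _)
  (eval_Padd (eProj 0 _) (eval_Pconst 2 _)) (eval_Ppred HV)) (eval_Pconst 1 _) HV)
  (eProj 1 _)) _.
by rewrite /mu_step addn2; case: (st).
Qed.

Lemma eval_Pbounded_mu tf v :
  (forall z, eval tf (z :: rcons xs s) (v z)) ->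
  eval (Pbounded_mu tf k) (rcons xs s) (mu_search v s).-1.
Proof.
move=> Htf; apply: eval_Ppred.
apply: eComp (eval_rec (eZero _) (fun i st => eval_Pmu_step i st Htf) s).
apply: esCons; first by apply: eval_proj; rewrite nth_rcons Hk ltnn eqxx.
by have := evals_proj_iota0 (rcons xs s); rewrite size_rcons Hk.
Qed.
End BoundedEvalProgram.

Fixpoint Pbounded (p : prf) (k : nat) {struct p} : prf :=
  match p with
  | PZero => Pconst 1
  | PSucc => Psucc (Psucc (Pproj_below k 0))
  | PProj i => Psucc (Pproj_below k i)
  | PComp f gs => Pbounded_comp (Pbounded f (size gs)) (map (Pbounded^~ k) gs) k
  | PRec f g => if k is k'.+1 then Pbounded_rec (Pbounded f k') (Pbounded g k.+1) k else PZero
  | PMu f => Pbounded_mu (Pbounded f k.+1) k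
  end.

Lemma eval_Pbounded p k s xs : size xs = k ->
  eval (Pbounded p k) (rcons xs s) (bounded_eval p s xs).
Proof.
elim/prf_nested_ind: p k s xs => [||i|f gs IHf IHgs|f g IHf IHg|f IHf] k s xs Hk /=.
- exact: (eval_Pconst 1).
- exact/eval_Psucc/eval_Psucc/eval_Pproj_below.
- exact/eval_Psucc/eval_Pproj_below.
- have Hgs : evals (map (Pbounded^~ k) gs) (rcons xs s)
      (map (fun g => bounded_eval g s xs) gs).
    elim: gs IHgs {IHf} => [_|g gs IH [Hg Hgs]]; first exact: esNil.
    exact: esCons (Hg _ _ _ Hk) (IH Hgs).
  apply: (eval_Pbounded_comp Hk Hgs); apply: IHf; by rewrite !size_map.
- case: k Hk => [|k] Hk; first by case: xs Hk => // _; apply: eZero.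
  case: xs Hk => // n xs [Hk] /=.
  apply: (eval_Pbounded_rec (G := fun i r => bounded_eval g s [:: i, r & xs]) Hk n
    (IHf _ _ _ Hk)).
  by move=> i r; apply: (IHg _ _ [:: i, r & xs]); rewrite /= Hk.
- apply: (eval_Pbounded_mu (v := fun z => bounded_eval f s (z :: xs)) Hk) => z.
  by apply: (IHf _ _ (z :: xs)); rewrite /= Hk.
Qed.

(** * A computable subset of a c.e. set with almost the same density *)

Definition Psum q := PRec PZero (Padd (PProj 1) q).

Lemma eval_Psum q xs (g : nat -> nat) n :
  (forall i r, eval q [:: i, r & xs] (g i)) -> eval (Psum q) (n :: xs) (\sum_(0 <= i < n) g i).
Proof.
move=> Hq.
apply: eval_eq (eval_rec (eZero _) (fun i r => eval_Padd (eProj 1 _) (Hq i r)) n) _.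
elim: n => [|n IH]; first by rewrite big_geq.
by rewrite big_nat_recr //= IH.
Qed.

Definition Pall q := PRec (Pconst 1) (Pmul (PProj 1) q).

Lemma eval_Pall q xs (P : pred nat) n :
  (forall i r, eval q [:: i, r & xs] (P i)) -> eval (Pall q) (n :: xs) (all P (iota 0 n)).
Proof.
move=> Hq.
apply: eval_eq (eval_rec (eval_Pconst 1 _) (fun i r => eval_Pmul (eProj 1 _) (Hq i r)) n) _.
by elim: n => [|n IH] //; rewrite iteriS IH -[n.+1]addn1 iotaD all_cat /= andbT mulnb.
Qed.

Definition count_set (S : set nat) (n : nat) : nat := \sum_(0 <= i < n) `[< S i >].

Definition halts_by (p : prf) (s x : nat) : bool := bounded_eval p s [:: x] != 0.

Lemma halts_by_mono p s s' x : s <= s' -> halts_by p s x -> halts_by p s' x.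
Proof. by rewrite /halts_by => Hs H; rewrite (bounded_eval_mono Hs H). Qed.

Definition Phalts_by p := Pnz (Pbounded p 1).

Lemma eval_Phalts_by p x s : eval (Phalts_by p) [:: x; s] (halts_by p s x).
Proof. exact/eval_Pnz/(@eval_Pbounded p 1 s [:: x]). Qed.

Section Construction.
Variables (p : prf) (N a K : nat).

Definition count_halted s m := \sum_(0 <= i < m) halts_by p s i.

Definition dense_at s m : bool := (m < N) || (a * m <= K * count_halted s m).

Definition caught_up s x : bool := all (dense_at s) (iota 0 (K * x.+1).+1).

Lemma caught_upP s x :
  reflect (forall m, N <= m <= K * x.+1 -> a * m <= K * count_halted s m) (caught_up s x).
Proof.
apply: (iffP allP) => [H m /andP[Nm mK]|H m].
  by have := H m; rewrite mem_iota ltnS mK /dense_at ltnNge Nm => /(_ isT).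
rewrite mem_iota ltnS /dense_at /= => mK; case: ltnP => //= Nm.
by apply: H; rewrite Nm.
Qed.

Lemma caught_up_le s x y : x <= y -> caught_up s y -> caught_up s x.
Proof.
move=> xy /caught_upP H; apply/caught_upP => m /andP[Nm mK]; apply: H.
by rewrite Nm (leq_trans mK) // leq_mul2l ltnS xy orbT.
Qed.

Definition Pcount := Psum (PComp (Phalts_by p) [:: PProj 0; PProj 2]).

Lemma eval_Pcount m s l : eval Pcount [:: m, s & l] (count_halted s m).
Proof.
apply: eval_Psum => i r; apply: eComp (eval_Phalts_by p i s).
by apply: esCons (eProj _ _) (esCons (eProj _ _) (esNil _)).
Qed.

Definition Pdense_at := Por (Pltn (PProj 0) (Pconst N))
  (Pleq (Pmul (Pconst a) (PProj 0)) (Pmul (Pconst K) Pcount)).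

Lemma eval_Pdense_at m s l : eval Pdense_at [:: m, s & l] (dense_at s m).
Proof.
apply: eval_Por; first exact: eval_Pltn (eProj 0 _) (eval_Pconst _ _).
apply: eval_Pleq; first exact: eval_Pmul (eval_Pconst _ _) (eProj 0 _).
exact: eval_Pmul (eval_Pconst _ _) (eval_Pcount _ _ _).
Qed.

Definition Pcaught_up := PComp (Pall (PComp Pdense_at [:: PProj 0; PProj 2]))
  [:: Psucc (Pmul (Pconst K) (Psucc (PProj 1))); PProj 0].

Lemma eval_Pcaught_up s x l : eval Pcaught_up [:: s, x & l] (caught_up s x).
Proof.
apply: eComp (eval_Pall (xs := [:: s]) _ _); last first.
  move=> i r; apply: eComp (eval_Pdense_at i s [::]).
  exact: esCons (eProj _ _) (esCons (eProj _ _) (esNil _)).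
apply: esCons (esCons (eProj _ _) (esNil _)).
exact: eval_Psucc (eval_Pmul (eval_Pconst K _) (eval_Psucc (eProj 1 _))).
Qed.
End Construction.

Section DenseSubset.
Variables (p : prf) (A : set nat) (N a K : nat).
Hypothesis HA : forall n, A n <-> exists y, eval p [:: n] y.
Hypothesis HK : 0 < K.
Hypothesis HN : forall m, N <= m -> a * m <= K * count_set A m.

Lemma halts_by_sound s x : halts_by p s x -> A x.
Proof.
rewrite /halts_by; case E: bounded_eval => [|y] // _.
by apply/HA; exists y; apply: bounded_eval_sound E.
Qed.

Lemma halts_by_complete x : A x -> exists s, halts_by p s x.
Proof. by move/HA=> [y /bounded_eval_complete [s Hs]]; exists s; rewrite /halts_by Hs. Qed.

Lemma ex_caught_up x : exists s, caught_up p N a K s x.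
Proof.
have [s Hs] : exists s, forall i, i < (K * x.+1).+1 -> A i -> halts_by p s i.
  apply: ex_uniform_bound => [i s s' ss' H /H|i _]; first exact: halts_by_mono.
  have [/halts_by_complete [s Hs]|] := pselect (A i); first by exists s.
  by move=> nAi; exists 0.
exists s; apply/caught_upP => m /andP[Nm mK]; apply: leq_trans (HN Nm) _.
rewrite leq_mul2l /count_set /count_halted !big_nat; apply/orP; right.
apply: leq_sum => i /andP[_ im]; case: (boolP `[< A i >]) => // /asboolP Ai.
by rewrite Hs // (leq_trans im) // leqW.
Qed.

Definition stage x := ex_minn (ex_caught_up x).

Lemma stage_caught_up x : caught_up p N a K (stage x) x.
Proof. by rewrite /stage; case: ex_minnP. Qed.

Lemma stage_min x s : caught_up p N a K s x -> stage x <= s.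
Proof. by rewrite /stage; case: ex_minnP => m _; apply. Qed.

Lemma stage_mono : {homo stage : x y / x <= y}.
Proof. by move=> x y xy; apply/stage_min/(caught_up_le xy)/stage_caught_up. Qed.

Definition dense_subset : set nat := fun x => halts_by p (stage x) x.

Lemma dense_subset_sub : dense_subset `<=` A.
Proof. by move=> x; apply: halts_by_sound. Qed.

Definition Pstage := PMu (Peq0 (Pcaught_up p N a K)).

Lemma eval_Pstage x : eval Pstage [:: x] (stage x).
Proof.
constructor.
  by apply: eval_eq (eval_Peq0 (eval_Pcaught_up _ _ _ _ _ _ _)) _; rewrite eqb0 stage_caught_up.
move=> z hz; exists 0; apply: eval_eq (eval_Peq0 (eval_Pcaught_up _ _ _ _ _ _ _)) _.
by rewrite eqb0; case: (boolP (caught_up _ _ _ _ _ _)) => // /stage_min; rewrite leqNgt hz.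
Qed.

Lemma dense_subset_computable : computable_set dense_subset.
Proof.
exists (PComp (Phalts_by p) [:: PProj 0; PComp Pstage [:: PProj 0]]) => x.
apply: eval_eq (eComp _ (eval_Phalts_by p x (stage x))) _; last by rewrite asboolb.
apply: esCons (eProj _ _) (esCons _ (esNil _)).
exact: eComp (esCons (eProj 0 [:: x]) (esNil _)) (eval_Pstage x).
Qed.

Lemma count_dense_subset m : N <= m -> a * m <= m + K * count_set dense_subset m.
Proof.
move=> Nm; pose j := m %/ K.
have mK : m <= K * j.+1 by rewrite mulnC ltnW // ltn_ceil.
have jm : j <= m by rewrite leq_div.
have /caught_upP/(_ m) := stage_caught_up j; rewrite Nm mK => /(_ isT) /leq_trans; apply.
rewrite /count_halted (big_cat_nat (leq0n j) jm) /= mulnDr leq_add //.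
  apply: leq_trans (leq_divM m K); rewrite mulnC leq_mul //.
  by have := sum_nat_bool_le (halts_by p (stage j)) 0 j; rewrite subn0.
rewrite leq_mul2l /count_set (big_cat_nat (leq0n j) jm) /=; apply/orP; right.
apply: leq_trans (leq_addl _ _); rewrite !big_nat; apply: leq_sum => i /andP[ji _].
rewrite /dense_subset asboolb.
by case: (boolP (halts_by p (stage j) i)) => // /(halts_by_mono (stage_mono ji)) ->.
Qed.
End DenseSubset.

Import Order.TTheory GRing.Theory Num.Theory.
Local Open Scope ring_scope.

Theorem ce_dense_computable_subset (A : set nat) (N a K : nat) :
  ce_set A -> (0 < K)%N -> (forall m, N <= m -> a * m <= K * count_set A m)%N ->
  exists B : set nat, [/\ B `<=` A, computable_set B &
    forall m, N <= m -> a * m <= m + K * count_set B m]%N.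
Proof.
move=> [p HA] HK HN; exists (dense_subset HA HN); split.
- exact: dense_subset_sub.
- exact: dense_subset_computable.
- exact: count_dense_subset.
Qed.

(** * Lower densities *)

Section LowerDensity.
Variable R : realType.

Lemma rho_count (S : set nat) n : rho R S n = (count_set S n)%:R / n%:R.
Proof. by rewrite /rho /count_set natr_sum. Qed.

Lemma count_set_le (S : set nat) n : (count_set S n <= n)%N.
Proof. by have := sum_nat_bool_le (fun i => `[< S i >]) 0 n; rewrite subn0. Qed.

Local Open Scope ereal_scope.

Lemma limn_einfE (u : (\bar R)^nat) : limn_einf u = ereal_sup (range (einfs u)).
Proof. by rewrite limn_einf_lim; apply/cvg_lim => //; apply: cvg_einfs_sup. Qed.

Lemma lt_limn_einf (u : (\bar R)^nat) x :
  x < limn_einf u -> exists n, forall k, (n <= k)%N -> x < u k.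
Proof.
rewrite limn_einfE => /ereal_sup_gt [_ [n _ <-] Hx]; exists n => k nk.
by apply: lt_le_trans Hx _; apply: ereal_inf_lbound; exists k.
Qed.

Lemma limn_einf_ge (u : (\bar R)^nat) c n :
  (forall k, (n <= k)%N -> c <= u k) -> c <= limn_einf u.
Proof.
move=> H; rewrite limn_einfE; apply: (@le_trans _ _ (einfs u n)).
  by apply: le_ereal_inf_tmp => _ [k nk <-]; apply: H.
by apply: ereal_sup_ubound; exists n.
Qed.

Lemma lower_density_real (S : set nat) : exists2 r : R, (0 <= r)%R & lower_density R S = r%:E.
Proof.
have ge0 : 0 <= lower_density R S.
  by apply: (@limn_einf_ge _ _ 0) => k _; rewrite lee_fin rho_count divr_ge0.
have le1 : lower_density R S <= 1.
  rewrite leNgt; apply/negP => /lt_limn_einf [n /(_ n (leqnn n))].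
  by rewrite lte_fin rho_count ltr_pdivlMr // mul1r ltr_nat ltnNge count_set_le.
by case: (lower_density R S) ge0 le1 => [r| |] // r0 _; exists r.
Qed.

Lemma count_ge_of_lower_density (S : set nat) (a K : nat) : (0 < K)%N ->
  (a%:R / K%:R)%:E < lower_density R S ->
  exists N, forall m, (N <= m -> a * m <= K * count_set S m)%N.
Proof.
move=> K0 /lt_limn_einf [n Hn]; exists n.+1 => -[//|k]; rewrite ltnS => /Hn.
rewrite lte_fin rho_count ltr_pdivrMr ?ltr0n // mulrC mulrA ltr_pdivlMr ?ltr0n //.
by rewrite -!natrM ltr_nat mulnC [(K * _)%N]mulnC => /ltnW.
Qed.

Lemma lower_density_ge_ratio (S : set nat) (N a K : nat) : (0 < K)%N ->
  (forall m, N <= m -> a * m <= m + K * count_set S m)%N ->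
  ((a%:R - 1) / K%:R)%:E <= lower_density R S.
Proof.
move=> K0 HS; apply: (@limn_einf_ge _ _ N) => k Nk.
rewrite lee_fin rho_count ler_pdivlMr ?ltr0n // -(@ler_pM2r _ K%:R) ?ltr0n //.
rewrite mulrAC divfK ?pnatr_eq0 -?lt0n //.
have := HS k.+1 (leqW Nk); rewrite -(ler_nat R) natrD !natrM; lra.
Qed.
End LowerDensity.

Lemma approx_ratio (R : realType) (r eps : R) : 0 <= r -> 0 < eps ->
  exists a K : nat, [/\ (0 < K)%N, a = 0%N \/ a%:R / K%:R < r & r - eps < (a%:R - 1) / K%:R].
Proof.
move=> r0 eps0; pose K := (Num.truncn (3 / eps)).+1.
have K0 : 0 < K%:R :> R by rewrite ltr0n.
have K3 : 3 < K%:R * eps by rewrite -ltr_pdivrMr // truncnS_gt.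
pose t := Num.truncn (K%:R * r).
have t_le : t%:R <= K%:R * r by rewrite truncn_le mulr_ge0.
have t_gt : K%:R * r < t.+1%:R by rewrite truncnS_gt.
have t_pred : t%:R <= t.-1%:R + 1 :> R by rewrite natr1 ler_nat leqSpred.
exists t.-1, K; split => //.
  case: t t_le {t_gt t_pred} => [|t] t_le; [by left | right].
  by rewrite ltr_pdivrMr //= -natr1 in t_le *; lra.
by rewrite ltr_pdivlMr // mulrBl -natr1 in t_gt *; lra.
Qed.

Theorem mainTheorem7 (R : realType) (A : set nat) (eps : R) :
  ce_set A -> 0 < eps ->
  exists B : set nat,
    [/\ B `<=` A, computable_set B &
        (lower_density R A - eps%:E < lower_density R B)%E].
Proof.
move=> ceA eps0; have [r r0 dA] := lower_density_real R A.
have [a [K [K0 a_lt r_lt]]] := approx_ratio r0 eps0.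
have [N HN] : exists N, forall m, (N <= m -> a * m <= K * count_set A m)%N.
  case: a_lt => [-> | a_lt]; first by exists 0%N => m _; rewrite mul0n.
  by apply: (count_ge_of_lower_density (R := R)) K0 _; rewrite dA lte_fin.
have [B [BA computableB HB]] := ce_dense_computable_subset ceA K0 HN.
exists B; split => //; rewrite dA -EFinB.
by apply: lt_le_trans (lower_density_ge_ratio R K0 HB); rewrite lte_fin.
Qed.
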